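(* Let $G_i\leq\mathrm{Sym}(n_i)$ for $1\leq i\leq k$ and let $G=G_1\times\cdots\times G_k$ be their external direct product acting on $[n_1]\times\cdots\times[n_k]$ by $(x_1,\dots,x_k)^{(g_1,\dots,g_k)}=(x_1^{g_1},\dots,x_k^{g_k})$. Then \[\alpha(\Gamma_G)=\alpha(\Gamma_{G_1})\cdots\alpha(\Gamma_{G_k}).\]
   Context: For a permutation group $G$ acting on a set, the derangement graph $\Gamma_G$ has vertex set $G$, with $\sigma,\pi$ adjacent iff $\sigma\pi^{-1}$ has no fixed point. $\alpha(X)$ denotes the size of a largest independent set in a graph $X$. *)

From mathcomp Require Import all_boot all_fingroup.
Set Implicit Arguments. Unset Strict Implicit. Unset Printing Implicit Defensive.
Local Open Scope group_scope.

(* Derangement graph of a permutation group G <= Sym(T): vertices are the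
   elements of G; s, p adjacent iff s * p^-1 has no fixed point in T. *)
Definition der_indep (T : finType) (G S : {set {perm T}}) : bool :=
  (S \subset G) &&
  [forall s in S, forall p in S, (s != p) ==> [exists x : T, (s * p^-1) x == x]].

Definition der_alpha (T : finType) (G : {set {perm T}}) : nat :=
  \max_(S : {set {perm T}} | der_indep G S) #|S|.

(* External direct product G_1 x ... x G_k of G_i <= Sym(n_i), as the set
   of tuples (g_1,...,g_k) with g_i in G_i, multiplied componentwise and
   acting on [n_1] x ... x [n_k] coordinatewise. *)
Definition prod_elt (k : nat) (n : 'I_k -> nat) :=
  {dffun forall i : 'I_k, {perm 'I_(n i)}}.
Definition prod_pt (k : nat) (n : 'I_k -> nat) :=
  {dffun forall i : 'I_k, 'I_(n i)}.

Definition prod_group (k : nat) (n : 'I_k -> nat)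
  (Gs : forall i : 'I_k, {group {perm 'I_(n i)}}) : {set prod_elt n} :=
  [set g : prod_elt n | [forall i, g i \in Gs i]].

Definition prod_has_fix (k : nat) (n : 'I_k -> nat) (s p : prod_elt n) : bool :=
  [exists x : prod_pt n, [forall i, (s i * (p i)^-1) (x i) == x i]].

Definition prod_indep (k : nat) (n : 'I_k -> nat)
  (Gs : forall i : 'I_k, {group {perm 'I_(n i)}}) (S : {set prod_elt n}) : bool :=
  (S \subset prod_group Gs) &&
  [forall s in S, forall p in S, (s != p) ==> prod_has_fix s p].

Definition prod_alpha (k : nat) (n : 'I_k -> nat)
  (Gs : forall i : 'I_k, {group {perm 'I_(n i)}}) : nat :=
  \max_(S : {set prod_elt n} | prod_indep Gs S) #|S|.

From mathcomp Require Import all_boot all_fingroup.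
Set Implicit Arguments. Unset Strict Implicit. Unset Printing Implicit Defensive.

(* An element of the product fixes a point iff each coordinate fixes a point,
   so an independent set projects onto independent sets, and a product of
   independent sets is independent.  Hence a maximum independent set S sits
   inside the product of its projections, giving [alpha(G) <= prod alpha(G_i)],
   while the product of maximum independent sets of the factors gives the
   reverse inequality. *)

Lemma der_indep_set0 (T : finType) (G : {set {perm T}}) : der_indep G set0.
Proof. by rewrite /der_indep sub0set; apply/forall_inP=> s; rewrite inE. Qed.

Lemma der_alpha_attained (T : finType) (G : {set {perm T}}) :
  {S : {set {perm T}} | der_indep G S & der_alpha G = #|S|}.
Proof.
have indep_gt0 : 0 < #|[pred S : {set {perm T}} | der_indep G S]|.
  by apply/card_gt0P; exists set0; rewrite inE der_indep_set0.
have [S indS alphaE] := eq_bigmax_cond (fun S : {set {perm T}} => #|S|) indep_gt0.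
by exists S.
Qed.

Section ProductGroup.

Variables (k : nat) (n : 'I_k -> nat).
Variable Gs : forall i : 'I_k, {group {perm 'I_(n i)}}.

Lemma prod_has_fixE (s p : prod_elt n) :
  prod_has_fix s p = [forall i, [exists x, (s i * (p i)^-1)%g x == x]].
Proof.
apply/idP/forallP.
  by case/existsP=> x /forallP fix_x i; apply/existsP; exists (x i).
move=> fix_i; apply/existsP; exists [ffun i => xchoose (existsP (fix_i i))].
by apply/forallP=> i; rewrite ffunE; exact: (xchooseP (existsP (fix_i i))).
Qed.

Definition prod_proj (S : {set prod_elt n}) (i : 'I_k) : {set {perm 'I_(n i)}} :=
  [set (g : prod_elt n) i | g in S].

Lemma prod_indep_proj S i : prod_indep Gs S -> der_indep (Gs i) (prod_proj S i).
Proof.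
case/andP=> /subsetP sSG /forall_inP indS; apply/andP; split.
  apply/subsetP=> _ /imsetP[g gS ->].
  by move: (sSG g gS); rewrite inE => /forallP; apply.
apply/forall_inP=> _ /imsetP[s sS ->]; apply/forall_inP=> _ /imsetP[p pS ->].
apply/implyP=> ne_sp_i.
have ne_sp : s != p by apply: contraNneq ne_sp_i => ->.
move/forall_inP: (indS s sS) => /(_ p pS).
by rewrite ne_sp prod_has_fixE => /forallP; apply.
Qed.

Lemma prod_indep_setXn (A : forall i, {set {perm 'I_(n i)}}) :
  (forall i, 0 < n i) -> (forall i, der_indep (Gs i) (A i)) ->
  prod_indep Gs (setXn A).
Proof.
move=> n_gt0 indA; apply/andP; split.
  apply/subsetP=> g /setXnP gA; rewrite inE; apply/forallP=> i.
  by case/andP: (indA i) => /subsetP sAG _; exact: sAG (gA i).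
apply/forall_inP=> s /setXnP sA; apply/forall_inP=> p /setXnP pA.
apply/implyP=> _; rewrite prod_has_fixE; apply/forallP=> i.
have [-> | ne_sp_i] := eqVneq (s i) (p i).
  by apply/existsP; exists (Ordinal (n_gt0 i)); rewrite mulgV perm1.
case/andP: (indA i) => _ /forall_inP /(_ _ (sA i)) /forall_inP /(_ _ (pA i)).
by rewrite ne_sp_i.
Qed.

Lemma prod_alpha_le : prod_alpha Gs <= \prod_(i < k) der_alpha (Gs i).
Proof.
apply/bigmax_leqP=> S indS.
apply: (@leq_trans #|setXn (prod_proj S)|).
  apply/subset_leq_card/subsetP=> g gS; apply/setXnP=> i.
  exact: imset_f.
rewrite cardsXn; apply: leq_prod=> i _.
exact: leq_bigmax_cond (prod_indep_proj i indS).
Qed.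

Lemma prod_alpha_ge :
  (forall i, 0 < n i) -> \prod_(i < k) der_alpha (Gs i) <= prod_alpha Gs.
Proof.
move=> n_gt0; pose A i := s2val (der_alpha_attained (Gs i)).
have alphaE i : der_alpha (Gs i) = #|A i|.
  by rewrite /A; case: der_alpha_attained.
rewrite (eq_bigr _ (fun i _ => alphaE i)) -cardsXn.
apply: leq_bigmax_cond; apply: prod_indep_setXn => // i.
by rewrite /A; case: der_alpha_attained.
Qed.

End ProductGroup.

Theorem lemma14 (k : nat) (n : 'I_k -> nat) (n_gt0 : forall i, 0 < n i)
  (Gs : forall i : 'I_k, {group {perm 'I_(n i)}}) :
  prod_alpha Gs = \prod_(i < k) der_alpha (Gs i).
Proof.
by apply/eqP; rewrite eqn_leq prod_alpha_le prod_alpha_ge.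
Qed.
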